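(* Let $E$ be a finite set with $|E|=n\ge1$, and consider the Boolean lattice of all subsets of $E$ with rank $\mathrm{rk}(F)=|F|$. Then, summing over chains of subsets that end at $E$, \[d_n(x)=\sum_{\varnothing=F_0\subsetneq F_1\subsetneq\cdots\subsetneq F_m=E}\ \prod_{i=1}^m\frac{x\bigl(1-x^{\mathrm{rk}(F_i)-\mathrm{rk}(F_{i-1})-1}\bigr)}{1-x},\] the sum over all $m\ge1$ and all such chains, and \[xA_n(x)=\sum_{F_0\subsetneq F_1\subsetneq\cdots\subsetneq F_m=E}\frac{x(1-x^{\mathrm{rk}(F_0)})}{1-x}\prod_{i=1}^m\frac{x\bigl(1-x^{\mathrm{rk}(F_i)-\mathrm{rk}(F_{i-1})-1}\bigr)}{1-x},\] the sum over all $m\ge0$ and all chains of subsets $F_0\subsetneq\cdots\subsetneq F_m=E$ (with $F_0$ arbitrary).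
   Context: Eulerian polynomials: $A_n(x)=\sum_{\sigma\in\mathfrak{S}_n}x^{\mathrm{des}(\sigma)}$ for $n\ge1$, with $\mathrm{des}(\sigma)=|\{i\in[n-1]:\sigma_i>\sigma_{i+1}\}|$. Derangement polynomials: $d_n(x)=\sum_{\sigma}x^{\mathrm{exc}(\sigma)}$ for $n\ge1$, the sum over fixed-point-free $\sigma\in\mathfrak{S}_n$, with $\mathrm{exc}(\sigma)=|\{i:\sigma_i>i\}|$. An empty product equals $1$. *)

From mathcomp Require Import all_boot all_order all_algebra all_fingroup.
Set Implicit Arguments. Unset Strict Implicit. Unset Printing Implicit Defensive.
Import GRing.Theory.
Local Open Scope ring_scope.

Definition des (n : nat) (s : 'S_n) : nat :=
  #|[set i : 'I_n | [exists j : 'I_n, (val j == (val i).+1) && (s j < s i)%N]]|.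

Definition exc (n : nat) (s : 'S_n) : nat := #|[set i : 'I_n | (i < s i)%N]|.

Definition eulerianA (R : ringType) (n : nat) (x : R) : R :=
  \sum_(s : 'S_n) x ^+ des s.

Definition derangementD (R : ringType) (n : nat) (x : R) : R :=
  \sum_(s : 'S_n | [forall i, s i != i]) x ^+ exc s.

Definition wt (R : fieldType) (x : R) (k : nat) : R :=
  x * (1 - x ^+ (k - 1)%N) / (1 - x).

Definition strict_chain (E : finType) (m : nat) (F : {ffun 'I_m.+1 -> {set E}}) : bool :=
  [forall i : 'I_m, F (widen_ord (leqnSn m) i) \proper F (lift ord0 i)].

Definition chain_wt (R : fieldType) (x : R) (E : finType) (m : nat)
    (F : {ffun 'I_m.+1 -> {set E}}) : R :=
  \prod_(i < m) wt x (#|F (lift ord0 i)| - #|F (widen_ord (leqnSn m) i)|)%N.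

From mathcomp Require Import all_boot all_order all_algebra all_fingroup.
From mathcomp Require Import zify ring.
Import GRing.Theory.

Set Implicit Arguments.
Unset Strict Implicit.
Unset Printing Implicit Defensive.

(* Inserting the letter n into the one-line word, resp. into a cycle, of a
   permutation of [n] shows that des and exc obey the same recurrence, so
   A_n(x) = sum_s x^exc(s), and that the weak excedance number exc + fix is
   distributed like exc + 1.  Choosing the fixed points first gives
   sum_s x^exc(s) y^fix(s) = sum_j C(n,j) y^j d_(n-j)(x); comparing y = 1 and
   y = x yields sum_j C(n,j) (x^j - x) d_(n-j)(x) = 0 for n >= 1, a recurrence
   that determines d_n from d_0 = 1.  Splitting off the first step of a chain,
   the chain sums satisfy the same recurrence because
   (1 - x) wt(k+1) = x - x^(k+1), which gives the first identity.  The second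
   follows from x A_n(x) = sum_j C(n,j) x^j d_(n-j)(x) by grouping chains
   according to their bottom F_0. *)

Lemma card_set_sum (T : finType) (P : pred T) : #|[set i | P i]| = \sum_i P i.
Proof. by rewrite -sum1dep_card big_mkcond; apply: eq_bigr => i _; case: (P i). Qed.

Lemma ltn_lift n (p : 'I_n.+1) (a b : 'I_n) : (lift p a < lift p b) = (a < b).
Proof. by rewrite /= /bump; case: (leqP p a); case: (leqP p b); lia. Qed.

Lemma sum_shift_bool (V : nmodType) (I : finType) (F : nat -> V) a (b : pred I) k :
  \sum_i ~~ b i = k -> (\sum_i F (a + b i)%N = F a *+ k + F a.+1 *+ (#|I| - k))%R.
Proof.
move=> <-.
have -> : #|I| = \sum_i ~~ b i + \sum_i b i.
  by rewrite -big_split -sum1_card; apply: eq_bigr => i _; case: (b i).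
rewrite addKn -!sumrMnr -big_split /=.
by apply: eq_bigr => i _; case: (b i); rewrite /= ?addn0 ?addn1 ?mulr0n ?mulr1n ?addr0 ?add0r.
Qed.

Section PermDecomposition.
Variables (T : Type) (idx : T) (op : Monoid.com_law idx).

Lemma big_lift_perm n (p q : 'I_n.+1) (F : 'S_n.+1 -> T) :
  \big[op/idx]_(s : 'S_n.+1 | s p == q) F s =
  \big[op/idx]_(s : 'S_n) F (lift_perm p q s).
Proof.
rewrite (reindex (lift_perm p q)); last first.
  pose ulsf i (s : 'S_n.+1) k := odflt k (unlift (s i) (s (lift i k))).
  have ulsfK i (s : 'S_n.+1) k : lift (s i) (ulsf i s k) = s (lift i k).
    rewrite /ulsf; have:= neq_lift i k.
    by rewrite -(can_eq (permK s)) => /unlift_some[] ? ? ->.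
  have inj_ulsf : injective (ulsf p _).
    move=> s; apply: can_inj (ulsf (s p) s^-1%g) _ => k'.
    by rewrite {1}/ulsf ulsfK !permK liftK.
  exists (fun s => perm (inj_ulsf s)) => [s _ | s].
    by apply/permP=> k'; rewrite permE /ulsf lift_perm_lift lift_perm_id liftK.
  move/(s _ =P _) => si0; apply/permP=> k.
  case: (unliftP p k) => [k'|] ->; rewrite ?lift_perm_id //.
  by rewrite lift_perm_lift -si0 permE ulsfK.
by apply: eq_bigl => s; rewrite lift_perm_id eqxx.
Qed.

Lemma big_perm_preimage_max n (F : 'S_n.+1 -> T) :
  \big[op/idx]_(t : 'S_n.+1) F t =
  \big[op/idx]_(i : 'I_n.+1) \big[op/idx]_(t : 'S_n.+1 | t i == ord_max) F t.
Proof.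
rewrite (partition_big (fun t : 'S_n.+1 => t^-1%g ord_max) predT) //=.
apply: eq_bigr => i _; apply: eq_bigl => t.
by apply/eqP/eqP => [<-|<-]; rewrite ?permKV ?permK.
Qed.

(* The letter n is inserted into the cycle of i, right after i (as a fixed
   point when i = n), resp. into the one-line word of s at position p. *)
Lemma big_perm_insert_cycle n (F : 'S_n.+1 -> T) :
  \big[op/idx]_(t : 'S_n.+1) F t =
  \big[op/idx]_(s : 'S_n) \big[op/idx]_(i : 'I_n.+1)
      F (tperm i ord_max * lift_perm ord_max ord_max s)%g.
Proof.
rewrite big_perm_preimage_max exchange_big /=; apply: eq_bigr => i _.
rewrite (reindex_inj (mulgI (tperm i ord_max))) /=.
rewrite -(big_lift_perm ord_max ord_max (fun r => F (tperm i ord_max * r)%g)).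
by apply: eq_bigl => r; rewrite permM tpermL.
Qed.

Lemma big_perm_insert_word n (F : 'S_n.+1 -> T) :
  \big[op/idx]_(t : 'S_n.+1) F t =
  \big[op/idx]_(s : 'S_n) \big[op/idx]_(p : 'I_n.+1) F (lift_perm p ord_max s).
Proof.
rewrite big_perm_preimage_max exchange_big /=; apply: eq_bigr => p _.
exact: big_lift_perm.
Qed.

End PermDecomposition.

Definition nfix n (s : 'S_n) : nat := #|[set i | s i == i]|.

Definition wexc n (s : 'S_n) : nat := #|[set i : 'I_n | i <= s i]|.

Lemma wexcE n (s : 'S_n) : wexc s = exc s + nfix s.
Proof.
rewrite /wexc /exc /nfix !card_set_sum -big_split /=; apply: eq_bigr => i _.
by rewrite leq_eqVlt -(inj_eq val_inj) /= eq_sym; case: ltngtP.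
Qed.

Lemma sum_nat_bigD2 n (i j : 'I_n) (G : 'I_n -> nat) : i != j ->
  \sum_t G t = G i + G j + \sum_(t | (t != i) && (t != j)) G t.
Proof.
move=> ij; rewrite (bigD1 i) //= (bigD1 j) /=; last by rewrite eq_sym.
by rewrite addnA; congr (_ + _); apply: eq_bigl => t; rewrite andbC.
Qed.

Lemma exc_lift_perm n (p : 'I_n.+1) (s : 'S_n) : exc (lift_perm p p s) = exc s.
Proof.
rewrite /exc !card_set_sum (bigD1_ord p) //= lift_perm_id ltnn add0n.
by apply: eq_bigr => k _; rewrite lift_perm_lift ltn_lift.
Qed.

Lemma nfix_lift_perm n (p : 'I_n.+1) (s : 'S_n) :
  nfix (lift_perm p p s) = (nfix s).+1.
Proof.
rewrite /nfix !card_set_sum (bigD1_ord p) //= lift_perm_id eqxx add1n.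
by congr _.+1; apply: eq_bigr => k _; rewrite lift_perm_lift (inj_eq (@lift_inj _ p)).
Qed.

Lemma wexc_lift_perm_max n (s : 'S_n) :
  wexc (lift_perm ord_max ord_max s) = (wexc s).+1.
Proof.
rewrite /wexc !card_set_sum (bigD1_ord ord_max) //= lift_perm_id leqnn add1n.
by congr _.+1; apply: eq_bigr => k _; rewrite lift_perm_lift lift_max /bump (leqNgt n) ltn_ord.
Qed.

Section CycleInsertion.
Variables (n : nat) (i : 'I_n.+1) (r : 'S_n.+1).
Hypothesis r_max : r ord_max = ord_max.

Lemma exc_tperm_max :
  exc (tperm i ord_max * r) = exc r + ((i != ord_max) && ~~ (i < r i)).
Proof.
have [->|im] := eqVneq i ord_max; first by rewrite tperm1 mul1g addn0.
rewrite /exc !card_set_sum !(sum_nat_bigD2 _ im) !permM tpermL tpermR r_max.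
have -> : (@ord_max n < r i) = false by rewrite ltnNge leq_ord.
have i_lt_n : i < n.
  by move: im; rewrite -val_eqE /= ltn_neqAle -ltnS ltn_ord andbT.
rewrite ltnn i_lt_n /=.
under eq_bigr => t /andP[ti tm] do rewrite permM tpermD 1?eq_sym //.
by case: (i < r i) => /=; lia.
Qed.

Lemma wexc_tperm_max :
  wexc (tperm i ord_max * r) + ((i != ord_max) && (i <= r i)) = wexc r.
Proof.
have [->|im] := eqVneq i ord_max; first by rewrite tperm1 mul1g addn0.
rewrite /wexc !card_set_sum !(sum_nat_bigD2 _ im) !permM tpermL tpermR r_max.
have -> : (@ord_max n <= r i) = false.
  apply/negbTE; rewrite -ltnNge ltn_neqAle -ltnS ltn_ord andbT.
  by apply/eqP => /val_inj; rewrite -{1}r_max => /perm_inj /eqP; apply/negP.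
rewrite leqnn -ltnS ltn_ord /=.
under eq_bigr => t /andP[ti tm] do rewrite permM tpermD 1?eq_sym //.
by case: (i <= r i) => /=; lia.
Qed.

End CycleInsertion.

Section Recurrences.
Variable V : nmodType.
Local Open Scope ring_scope.

Lemma sum_exc_rec n (F : nat -> V) :
  \sum_(t : 'S_n.+1) F (exc t) =
  \sum_(s : 'S_n) (F (exc s) *+ (exc s).+1 + F (exc s).+1 *+ (n - exc s)).
Proof.
rewrite big_perm_insert_cycle; apply: eq_bigr => s _.
under eq_bigr do rewrite exc_tperm_max ?lift_perm_id // exc_lift_perm.
rewrite (sum_shift_bool _ _ (k := (exc s).+1)) ?card_ord ?subSS //.
rewrite (bigD1_ord ord_max) //= eqxx add1n; congr _.+1.
rewrite /exc card_set_sum; apply: eq_bigr => k _.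
by rewrite lift_eqF lift_perm_lift lift_max /bump (leqNgt n) ltn_ord /= negbK.
Qed.

Lemma sum_wexc_rec n (F : nat -> V) :
  \sum_(t : 'S_n.+1) F (wexc t) =
  \sum_(s : 'S_n) (F (wexc s) *+ wexc s + F (wexc s).+1 *+ (n.+1 - wexc s)).
Proof.
rewrite big_perm_insert_cycle; apply: eq_bigr => s _.
have wexc_ins (i : 'I_n.+1) :
    wexc (tperm i ord_max * lift_perm ord_max ord_max s)%g =
    (wexc s + ~~ ((i != ord_max) && (i <= lift_perm ord_max ord_max s i)))%N.
  have := wexc_tperm_max i (lift_perm_id ord_max ord_max s).
  by rewrite wexc_lift_perm_max; case: (_ && _) => /=; lia.
under eq_bigr do rewrite wexc_ins.
rewrite (sum_shift_bool _ _ (k := wexc s)) ?card_ord //.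
rewrite (bigD1_ord ord_max) //= eqxx /= add0n.
rewrite /wexc card_set_sum; apply: eq_bigr => k _.
by rewrite lift_perm_lift !lift_max lift_eqF /= negbK /bump (leqNgt n) ltn_ord.
Qed.

Lemma sum_wexc_exc n (F : nat -> V) :
  \sum_(s : 'S_n.+1) F (wexc s) = \sum_(s : 'S_n.+1) F (exc s).+1.
Proof.
elim: n F => [|n IH] F.
  apply: eq_bigr => s _; have s0 : s ord0 = ord0 by rewrite [s ord0]ord1.
  by rewrite /wexc /exc !card_set_sum !big_ord1 s0.
rewrite sum_wexc_rec (IH (fun w => F w *+ w + F w.+1 *+ (n.+2 - w)%N)).
by rewrite (@sum_exc_rec _ (fun e => F e.+1)); apply: eq_bigr => s _; rewrite subSS.
Qed.

End Recurrences.

(* The one-line word of [s], padded with zeros, so that descents can be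
   counted on prefixes of any length. *)
Definition permf n (s : 'S_n) (k : nat) : nat :=
  oapp (fun i : 'I_n => val (s i)) 0 (insub k).

Definition ndes (f : nat -> nat) m := \sum_(i < m.-1) (f i.+1 < f i).

Lemma permfE n (s : 'S_n) (i : 'I_n) : permf s i = s i.
Proof. by rewrite /permf valK. Qed.

Lemma permf_out n (s : 'S_n) k : n <= k -> permf s k = 0.
Proof. by move=> h; rewrite /permf insubN // -leqNgt. Qed.

Lemma permf_lt n (s : 'S_n) k : k < n -> permf s k < n.
Proof. by move=> h; rewrite -[k]/(val (Ordinal h)) permfE. Qed.

Lemma ndesS f m : ndes f m.+1 = ndes f m + ((0 < m) && (f m < f m.-1)).
Proof. by case: m => [|m]; rewrite /ndes ?big_ord0 //= big_ord_recr. Qed.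

Lemma eq_ndes f g m : (forall k, k < m -> f k = g k) -> ndes f m = ndes g m.
Proof. by move=> fg; apply: eq_bigr => i _; have hi := ltn_ord i; rewrite !fg //; lia. Qed.

(* Inserting a value [M] larger than all of [f] at position [p <= m]. *)
Lemma ndes_insert f g M p :
  (forall k, k < p -> g k = f k) -> g p = M -> (forall k, p < k -> g k = f k.-1) ->
  forall m, p <= m -> (forall k, k < m -> f k < M) ->
  ndes g m.+1 + [&& 0 < p, p < m & f p < f p.-1] = ndes f m + (p < m).
Proof.
move=> g_lo g_p g_hi; elim=> [|m IH] p_le_m f_lt.
  have -> : p = 0 by lia.
  by rewrite /ndes /= !big_ord0.
have gS := ndesS g m.+1; rewrite /= in gS.
have [p_le_m'|p_eq] : p <= m \/ p = m.+1 by lia.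
- have IHm := IH p_le_m' (fun k km => f_lt k (ltnW km)).
  have fS := ndesS f m.
  rewrite g_hi // in gS.
  have [p_lt_m|p_eq_m] : p < m \/ p = m by lia.
  + rewrite g_hi // in gS; rewrite (_ : 0 < m) // in fS; last by lia.
    rewrite p_lt_m (_ : p < m.+1) /= in IHm *; last by lia.
    move: IHm gS fS; case: (_ && _); case: (f m < f m.-1) => /=; lia.
  + subst p; rewrite g_p (f_lt m) // in gS; rewrite ltnn andbF addn0 in IHm.
    by rewrite gS ltnSn /= fS IHm; case: (_ && _) => /=; lia.
- subst p; rewrite g_p g_lo // in gS.
  have M_ge : (M < f m) = false by apply/negbTE; rewrite -leqNgt ltnW ?f_lt.
  by rewrite gS M_ge ltnn andbF !addn0; apply: eq_ndes.
Qed.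

Lemma des_ndes n (s : 'S_n) : des s = ndes (permf s) n.
Proof.
rewrite /des card_set_sum; case: n s => [|n] s; first by rewrite /ndes !big_ord0.
rewrite big_ord_recr /= /ndes /=.
have -> : [exists j : 'I_n.+1, (val j == n.+1) && (s j < s ord_max)] = false.
  by apply/negbTE/existsP => -[j /andP[/eqP j_eq _]]; have := ltn_ord j; rewrite j_eq ltnn.
rewrite addn0; apply: eq_bigr => i _; have i_lt : i.+1 < n.+1 by rewrite ltnS.
rewrite -[i.+1]/(val (Ordinal i_lt)) -[nat_of_ord i]/(val (widen_ord (leqnSn n) i)) !permfE.
congr (nat_of_bool _); apply/existsP/idP => [[j /andP[/eqP j_eq]]|s_lt].
  by rewrite (_ : j = Ordinal i_lt) //; apply: val_inj.
by exists (Ordinal i_lt); rewrite eqxx.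
Qed.

Lemma permf_lift_perm_max n (s : 'S_n) (p : 'I_n.+1) k :
  permf (lift_perm p ord_max s) k =
  if k < p then permf s k else if k == p then n else permf s k.-1.
Proof.
have p_le_n := leq_ord p.
case: ltngtP => [k_lt_p|p_lt_k|->]; last by rewrite permfE lift_perm_id.
- have k_lt_n : k < n by lia.
  have k_eq : k = lift p (Ordinal k_lt_n) by rewrite /= /bump leqNgt k_lt_p.
  by rewrite {1}k_eq permfE lift_perm_lift lift_max -[k]/(val (Ordinal k_lt_n)) permfE.
- case: (leqP k n) => k_le_n; last by rewrite !permf_out //; lia.
  have k'_lt_n : k.-1 < n by lia.
  have k_eq : k = lift p (Ordinal k'_lt_n).
    by rewrite /= /bump (_ : p <= k.-1) ?add1n; lia.
  rewrite {1}k_eq permfE lift_perm_lift lift_max.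
  by rewrite -[k.-1]/(val (Ordinal k'_lt_n)) permfE.
Qed.

Lemma des_lift_perm_max n (s : 'S_n) (p : 'I_n.+1) :
  des (lift_perm p ord_max s) =
  des s + ((p < n) && ~~ ((0 < p) && (permf s p < permf s p.-1))).
Proof.
rewrite !des_ndes; pose g := permf (lift_perm p ord_max s).
have g_lo k : k < p -> g k = permf s k by move=> k_lt; rewrite /g permf_lift_perm_max k_lt.
have g_p : g p = n by rewrite /g permf_lift_perm_max ltnn eqxx.
have g_hi k : p < k -> g k = permf s k.-1.
  by move=> p_lt; rewrite /g permf_lift_perm_max ltnNge ltnW //= gtn_eqF.
have := ndes_insert g_lo g_p g_hi (leq_ord p) (fun k => @permf_lt n s k).
rewrite -/g; case: (p < n); case: (0 < p); case: (permf s p < permf s p.-1) => /=; lia.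
Qed.

Lemma count_des_lift_perm_max n (s : 'S_n) :
  \sum_(p : 'I_n.+1) ~~ ((p < n) && ~~ ((0 < p) && (permf s p < permf s p.-1)))
  = (des s).+1.
Proof.
rewrite big_ord_recr /= ltnn addn1 des_ndes; congr _.+1.
case: n s => [|n] s; first by rewrite /ndes !big_ord0.
rewrite big_ord_recl /ndes /=; apply: eq_bigr => i _.
by rewrite /bump leq0n add1n ltnS ltn_ord /= negbK.
Qed.

Section DescentRecurrence.
Variable V : nmodType.
Local Open Scope ring_scope.

Lemma sum_des_rec n (F : nat -> V) :
  \sum_(t : 'S_n.+1) F (des t) =
  \sum_(s : 'S_n) (F (des s) *+ (des s).+1 + F (des s).+1 *+ (n - des s)).
Proof.
rewrite big_perm_insert_word; apply: eq_bigr => s _.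
under eq_bigr do rewrite des_lift_perm_max.
by rewrite (sum_shift_bool _ _ (count_des_lift_perm_max s)) card_ord subSS.
Qed.

Lemma sum_exc_des n (F : nat -> V) :
  \sum_(s : 'S_n) F (exc s) = \sum_(s : 'S_n) F (des s).
Proof.
elim: n F => [|n IH] F.
  by apply: eq_bigr => s _; rewrite /exc /des !card_set_sum !big_ord0.
rewrite sum_exc_rec sum_des_rec.
exact: (IH (fun e => F e *+ e.+1 + F e.+1 *+ (n - e)%N)).
Qed.

End DescentRecurrence.

Definition nperm_fix_exc n j k := \sum_(s : 'S_n) ((nfix s == j) && (exc s == k)).

(* Double count the pairs (s, p) with p a fixed point of s. *)
Lemma nperm_fix_excS n j k :
  j.+1 * nperm_fix_exc n.+1 j.+1 k = n.+1 * nperm_fix_exc n j k.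
Proof.
rewrite /nperm_fix_exc big_distrr /=.
transitivity (\sum_(s : 'S_n.+1) ((nfix s == j.+1) && (exc s == k)) * nfix s).
  by apply: eq_bigr => s _; case: eqP => [->|] //=; rewrite mulnC.
transitivity (\sum_(p : 'I_n.+1) \sum_(s : 'S_n.+1 | s p == p)
                 ((nfix s == j.+1) && (exc s == k))); last first.
  rewrite -[n.+1 in RHS]card_ord -sum1_card big_distrl /=.
  apply: eq_bigr => p _; rewrite mul1n big_lift_perm.
  by apply: eq_bigr => s _; rewrite nfix_lift_perm exc_lift_perm eqSS.
under [RHS]eq_bigr do rewrite big_mkcond /=.
rewrite exchange_big /=; apply: eq_bigr => s _.
rewrite /nfix card_set_sum big_distrr /=.
by apply: eq_bigr => p _; case: (s p == p); rewrite ?muln1 ?muln0.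
Qed.

Lemma nfix_le n (s : 'S_n) : nfix s <= n.
Proof. by rewrite -[X in _ <= X]card_ord max_card. Qed.

Lemma exc_le n (s : 'S_n) : exc s <= n.
Proof. by rewrite -[X in _ <= X]card_ord max_card. Qed.

Lemma nperm_fix_exc_bin n j k :
  nperm_fix_exc n j k = 'C(n, j) * nperm_fix_exc (n - j) 0 k.
Proof.
elim: j n => [|j IH] [|n]; rewrite ?bin0 ?subn0 ?mul1n //.
  by rewrite bin0n mul0n /nperm_fix_exc big1 // => s _; have := nfix_le s; rewrite leqn0 => /eqP ->.
apply/eqP; rewrite -(eqn_pmul2l (ltn0Sn j)) nperm_fix_excS IH subSS mulnA.
by rewrite mul_bin_diag mulnA.
Qed.

Section FixExcGeneratingFunction.
Variable V : nmodType.
Local Open Scope ring_scope.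

Lemma sum_ord_mulrn_eq B a (X : nat -> V) : (a < B)%N ->
  \sum_(j < B) X j *+ (a == j) = X a.
Proof.
move=> a_lt; rewrite (bigD1 (Ordinal a_lt)) //= eqxx mulr1n big1 ?addr0 // => j j_neq.
by rewrite eq_sym -val_eqE /= in j_neq; rewrite (negbTE j_neq) mulr0n.
Qed.

Lemma sum_nfix_exc n B (G : nat -> nat -> V) : (n < B)%N ->
  \sum_(s : 'S_n) G (nfix s) (exc s) =
  \sum_(j < B) \sum_(k < B) G j k *+ nperm_fix_exc n j k.
Proof.
move=> n_lt_B.
under [RHS]eq_bigr do under eq_bigr do rewrite /nperm_fix_exc -sumrMnr.
under [RHS]eq_bigr do rewrite exchange_big /=.
rewrite exchange_big /=; apply: eq_bigr => s _.
under eq_bigr do under eq_bigr do rewrite -mulnb mulnC mulrnA.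
under eq_bigr do rewrite sumrMnl.
rewrite (sum_ord_mulrn_eq (fun j => \sum_(k < B) G j k *+ (exc s == k))).
  by rewrite sum_ord_mulrn_eq //; exact: leq_ltn_trans (exc_le s) n_lt_B.
exact: leq_ltn_trans (nfix_le s) n_lt_B.
Qed.

End FixExcGeneratingFunction.

Definition derangement_recurrence (R : comNzRingType) (x : R) (u : nat -> R) :=
  forall n, (0 < n)%N ->
  (\sum_(j < n.+1) 'C(n, j)%:R * (x ^+ j - x) * u (n - j)%N = 0)%R.

Section DerangementPolynomials.
Variables (R : comNzRingType) (x : R).
Local Open Scope ring_scope.

Lemma derangement_nfix n (s : 'S_n) : [forall i, s i != i] = (nfix s == 0%N).
Proof. by rewrite /nfix card_set_sum sum_nat_eq0; apply: eq_forallb => i; case: (s i == i). Qed.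

Lemma derangementDE n B : (n < B)%N ->
  derangementD n x = \sum_(k < B) x ^+ k *+ nperm_fix_exc n 0 k.
Proof.
move=> n_lt_B; rewrite /derangementD.
under eq_bigl do rewrite derangement_nfix.
rewrite big_mkcond /=.
transitivity (\sum_(s : 'S_n) (fun j k => x ^+ k *+ (j == 0%N)) (nfix s) (exc s)).
  by apply: eq_bigr => s _ /=; case: (nfix s == 0%N); rewrite ?mulr1n ?mulr0n.
rewrite (sum_nfix_exc (fun j k => x ^+ k *+ (j == 0%N)) n_lt_B).
transitivity (\sum_(j < B) (\sum_(k < B) x ^+ k *+ nperm_fix_exc n j k) *+ (0%N == j)).
  apply: eq_bigr => j _; rewrite -sumrMnl; apply: eq_bigr => k _.
  by rewrite mulrnAC eq_sym.
exact: (sum_ord_mulrn_eq (fun j => \sum_(k < B) x ^+ k *+ nperm_fix_exc n j k)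
  (leq_ltn_trans (leq0n n) n_lt_B)).
Qed.

Lemma derangementD0 : derangementD 0 x = 1.
Proof.
rewrite (derangementDE (B := 1)) // big_ord1 /nperm_fix_exc.
rewrite (eq_bigr (fun _ => 1%N)) ?sum1_card ?card_Sn //.
by move=> s _; rewrite /nfix /exc !card_set_sum !big_ord0.
Qed.

Lemma sum_exc_nfix n (y : R) :
  \sum_(s : 'S_n) x ^+ exc s * y ^+ nfix s =
  \sum_(j < n.+1) 'C(n, j)%:R * y ^+ j * derangementD (n - j) x.
Proof.
rewrite (sum_nfix_exc (fun j k => x ^+ k * y ^+ j) (ltnSn n)); apply: eq_bigr => j _.
rewrite (derangementDE (B := n.+1)); last by have := ltn_ord j; lia.
rewrite mulr_sumr; apply: eq_bigr => k _.
by rewrite nperm_fix_exc_bin; ring.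
Qed.

Lemma eulerianA_exc n : eulerianA n x = \sum_(s : 'S_n) x ^+ exc s.
Proof. by rewrite /eulerianA (@sum_exc_des _ n (fun e => x ^+ e)). Qed.

Lemma sum_wexc n : \sum_(s : 'S_n) x ^+ wexc s =
  \sum_(j < n.+1) 'C(n, j)%:R * x ^+ j * derangementD (n - j) x.
Proof. by rewrite -sum_exc_nfix; apply: eq_bigr => s _; rewrite wexcE exprD. Qed.

Lemma mul_eulerianA n : (0 < n)%N ->
  x * eulerianA n x = \sum_(j < n.+1) 'C(n, j)%:R * x ^+ j * derangementD (n - j) x.
Proof.
case: n => [|n] // _; rewrite -sum_wexc eulerianA_exc mulr_sumr.
by rewrite (@sum_wexc_exc _ n (fun w => x ^+ w)); apply: eq_bigr => s _; rewrite exprS.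
Qed.

Lemma derangementD_recurrence : derangement_recurrence x (fun n => derangementD n x).
Proof.
move=> n n_gt0.
have -> : \sum_(j < n.+1) 'C(n, j)%:R * (x ^+ j - x) * derangementD (n - j) x =
    \sum_(j < n.+1) 'C(n, j)%:R * x ^+ j * derangementD (n - j) x
    - x * \sum_(j < n.+1) 'C(n, j)%:R * 1 ^+ j * derangementD (n - j) x.
  by rewrite mulr_sumr -sumrB; apply: eq_bigr => j _; rewrite expr1n; ring.
rewrite -mul_eulerianA // -sum_exc_nfix eulerianA_exc.
by under [X in _ - _ * X]eq_bigr do rewrite expr1n mulr1; rewrite subrr.
Qed.

End DerangementPolynomials.

Local Open Scope ring_scope.

Section RecurrenceSolution.
Variables (R : fieldType) (x : R).

(* Weight of the chains of length m from a set of corank r to the top,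
   enumerated by the size k.+1 of their first step. *)
Fixpoint corank_chain_sum (m r : nat) : R :=
  if m is m'.+1 then
    \sum_(k < r) 'C(r, k.+1)%:R * wt x k.+1 * corank_chain_sum m' (r - k.+1)
  else (r == 0)%:R.

Definition chain_total r := \sum_(m < r.+1) corank_chain_sum m r.

Lemma corank_chain_sum_eq0 m r : (r < m)%N -> corank_chain_sum m r = 0.
Proof.
elim: m r => [|m IH] r //= r_lt.
by apply: big1 => k _; rewrite IH ?mulr0 //; have := ltn_ord k; lia.
Qed.

Lemma chain_totalE r B : (r < B)%N -> \sum_(m < B) corank_chain_sum m r = chain_total r.
Proof.
move=> r_lt; rewrite /chain_total -!(big_mkord xpredT (corank_chain_sum^~ r)).
rewrite (big_cat_nat _ (n := r.+1)) //= [X in _ + X]big_nat_cond [X in _ + X]big1 ?addr0 //.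
by move=> m /andP[/andP[r_lt_m _] _]; exact: corank_chain_sum_eq0.
Qed.

Lemma chain_total0 : chain_total 0 = 1.
Proof. by rewrite /chain_total big_ord1. Qed.

Lemma binomial_sum_split (u : nat -> R) n :
  \sum_(j < n.+1) 'C(n, j)%:R * (x ^+ j - x) * u (n - j)%N =
  (1 - x) * u n - \sum_(k < n) 'C(n, k.+1)%:R * (x - x ^+ k.+1) * u (n - k.+1)%N.
Proof.
rewrite big_ord_recl bin0 subn0 expr0 mul1r -sumrN; congr (_ + _).
by apply: eq_bigr => k _; rewrite /bump /=; ring.
Qed.

Hypothesis x_neq1 : x != 1.

Lemma one_subr_neq0 : 1 - x != 0.
Proof. by rewrite subr_eq0 eq_sym. Qed.

Lemma mul_wt k : (1 - x) * wt x k.+1 = x - x ^+ k.+1.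
Proof. by rewrite /wt subSS subn0 exprS; field; exact: one_subr_neq0. Qed.

Lemma derangement_recurrence_uniq (u v : nat -> R) :
  derangement_recurrence x u -> derangement_recurrence x v -> u 0%N = v 0%N ->
  u =1 v.
Proof.
move=> u_rec v_rec uv0 n; elim/ltn_ind: n => -[|n] IH //.
have := u_rec n.+1 isT; have := v_rec n.+1 isT; rewrite !binomial_sum_split.
under [X in _ - X = 0 -> _]eq_bigr => k _ do rewrite -IH ?subSS ?ltnS ?leq_subr //.
move/eqP; rewrite subr_eq0 => /eqP <- /eqP; rewrite subr_eq0 => /eqP.
exact: (mulfI one_subr_neq0).
Qed.

Lemma chain_total_recurrence : derangement_recurrence x chain_total.
Proof.
move=> [|n] // _; rewrite binomial_sum_split; apply/eqP; rewrite subr_eq0; apply/eqP.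
rewrite /chain_total big_ord_recl /= add0r exchange_big big_distrr /=.
apply: eq_bigr => k _.
rewrite -big_distrr /= chain_totalE; last by rewrite /bump /=; lia.
by rewrite -mul_wt /chain_total; ring.
Qed.

Lemma derangementD_chain_total n : derangementD n x = chain_total n.
Proof.
apply: (derangement_recurrence_uniq (derangementD_recurrence x) chain_total_recurrence).
by rewrite derangementD0 chain_total0.
Qed.

End RecurrenceSolution.

Section Chains.
Variables (R : fieldType) (x : R) (E : finType).

Definition chain_behead m (F : {ffun 'I_m.+2 -> {set E}}) : {ffun 'I_m.+1 -> {set E}} :=
  [ffun i => F (lift ord0 i)].

Definition chain_cons m (A : {set E}) (G : {ffun 'I_m.+1 -> {set E}}) :
  {ffun 'I_m.+2 -> {set E}} :=
  [ffun i => if unlift ord0 i is Some j then G j else A].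

Lemma chain_consK m A (G : {ffun 'I_m.+1 -> {set E}}) : chain_behead (chain_cons A G) = G.
Proof. by apply/ffunP => i; rewrite !ffunE liftK. Qed.

Lemma chain_cons0 m A (G : {ffun 'I_m.+1 -> {set E}}) : chain_cons A G ord0 = A.
Proof. by rewrite ffunE unlift_none. Qed.

Lemma chain_behead_max m (F : {ffun 'I_m.+2 -> {set E}}) :
  chain_behead F ord_max = F ord_max.
Proof. by rewrite ffunE; congr (F _); apply: val_inj. Qed.

Lemma widen_lift0 m (i : 'I_m) :
  widen_ord (leqnSn m.+1) (lift ord0 i) = lift ord0 (widen_ord (leqnSn m) i).
Proof. exact: val_inj. Qed.

Lemma strict_chain_behead m (F : {ffun 'I_m.+2 -> {set E}}) :
  strict_chain F = (F ord0 \proper chain_behead F ord0) && strict_chain (chain_behead F).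
Proof.
have widen0 : widen_ord (leqnSn m.+1) ord0 = ord0 by apply: val_inj.
apply/forallP/andP => [chF | [F0 /forallP chF] i].
  split; first by have := chF ord0; rewrite ffunE widen0.
  by apply/forallP => i; have := chF (lift ord0 i); rewrite !ffunE widen_lift0.
case: (unliftP ord0 i) => [j ->|->]; last by move: F0; rewrite ffunE widen0.
by have := chF j; rewrite !ffunE widen_lift0.
Qed.

Lemma chain_wt_behead m (F : {ffun 'I_m.+2 -> {set E}}) :
  chain_wt x F = wt x (#|chain_behead F ord0| - #|F ord0|) * chain_wt x (chain_behead F).
Proof.
rewrite /chain_wt big_ord_recl; congr (_ * _).
  by rewrite ffunE; congr (wt x (_ - #|F _|)); exact: val_inj.
by apply: eq_bigr => i _; rewrite !ffunE widen_lift0.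
Qed.

Definition chain_sum m (A : {set E}) : R :=
  \sum_(F : {ffun 'I_m.+1 -> {set E}} |
          [&& strict_chain F, F ord0 == A & F ord_max == setT]) chain_wt x F.

Lemma chain_sum0 A : chain_sum 0 A = (A == setT)%:R.
Proof.
have max0 : (ord_max : 'I_1) = ord0 by apply: val_inj.
have chain0 (F : {ffun 'I_1 -> {set E}}) : strict_chain F by apply/forallP => -[].
rewrite /chain_sum max0; have [->|A_neqT] := eqVneq A setT.
  rewrite (big_pred1 [ffun=> setT]) /chain_wt ?big_ord0 // => F /=.
  rewrite chain0 andbb; apply/eqP/eqP => [F0|->]; last by rewrite ffunE.
  by apply/ffunP => i; rewrite ffunE -F0 [i]ord1.
rewrite big_pred0 // => F; rewrite chain0 /=.
by case: eqP => // ->; rewrite (negbTE A_neqT).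
Qed.

Lemma chain_sumS m A :
  chain_sum m.+1 A = \sum_(B : {set E} | A \proper B) wt x (#|B| - #|A|) * chain_sum m B.
Proof.
rewrite /chain_sum (reindex_onto (@chain_cons m A) (@chain_behead m)) /=; last first.
  move=> F /and3P[_ /eqP F0 _]; apply/ffunP => i; rewrite ffunE.
  by case: unliftP => [j ->|->]; rewrite ?ffunE.
rewrite (partition_big (fun G : {ffun 'I_m.+1 -> {set E}} => G ord0)
            (fun B => A \proper B)) /=; last first.
  by move=> G; rewrite strict_chain_behead chain_consK chain_cons0 => /andP[/and3P[/andP[]]].
apply: eq_bigr => B A_lt_B; rewrite mulr_sumr.
apply: eq_big => [G|G /andP[_ /eqP G0]]; last first.
  by rewrite chain_wt_behead chain_consK chain_cons0 G0.
rewrite strict_chain_behead chain_consK chain_cons0 eqxx -chain_behead_max chain_consK.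
by case: (eqVneq (G ord0) B) => [->|]; rewrite ?A_lt_B ?andbF ?andbT //= eqxx andbT.
Qed.

End Chains.

Section SubsetSums.
Variables (V : nmodType) (E : finType).

Lemma sum_subsets_card (C : {set E}) (g : nat -> V) :
  \sum_(D : {set E} | D \subset C) g #|D| = \sum_(k < #|C|.+1) g k *+ 'C(#|C|, k).
Proof.
transitivity (\sum_(D : {set E} | D \subset C) \sum_(k < #|C|.+1) g k *+ (#|D| == k)).
  by apply: eq_bigr => D D_sub; rewrite sum_ord_mulrn_eq // ltnS subset_leq_card.
rewrite exchange_big /=; apply: eq_bigr => k _.
rewrite sumrMnr -cards_draws card_set_sum big_mkcond /=.
by congr (g k *+ _); apply: eq_bigr => D _; case: (D \subset C).
Qed.

Lemma sum_supsets (A : {set E}) (g : nat -> V) :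
  \sum_(B : {set E} | A \subset B) g #|B :\: A| =
  \sum_(D : {set E} | D \subset ~: A) g #|D|.
Proof.
rewrite (reindex_onto (fun D => A :|: D) (fun B => B :\: A)) /=; last first.
  move=> B /subsetP A_sub; apply/setP => y; rewrite !inE.
  by case: (boolP (y \in A)) (A_sub y) => // _ ->.
apply: eq_big => [D|D /andP[_ /eqP ->] //].
rewrite subsetUl /=; apply/eqP/idP => [<-|/subsetP D_sub].
  by apply/subsetP => y; rewrite !inE => /andP[].
apply/setP => y; rewrite !inE; have := D_sub y; rewrite !inE.
by case: (y \in A); case: (y \in D) => // ->.
Qed.

End SubsetSums.

Lemma chain_sum_corank (R : fieldType) (x : R) (E : finType) m (A : {set E}) :
  chain_sum x m A = corank_chain_sum x m #|~: A|.
Proof.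
elim: m A => [|m IH] A.
  by rewrite chain_sum0 /= cards_eq0 -setCT (inj_eq (@setC_inj _)).
rewrite chain_sumS /=; under eq_bigr do rewrite IH.
set r := #|~: A|.
pose g k := (k != 0)%:R * (wt x k * corank_chain_sum x m (r - k)).
transitivity (\sum_(B : {set E} | A \subset B) g #|B :\: A|).
  rewrite [RHS]big_mkcond [LHS]big_mkcond /=; apply: eq_bigr => B _.
  rewrite properEcard; case: (boolP (A \subset B)) => //= A_sub.
  have := cardsC A; have := cardsC B; have := subset_leq_card A_sub.
  rewrite /g cardsDS // /r; case: ltnP => [A_lt_B|B_le_A] *.
    by rewrite (_ : (#|B| - #|A|)%N != 0) ?mul1r; first congr (_ * corank_chain_sum _ _ _); lia.
  by rewrite (_ : (#|B| - #|A|)%N = 0) ?mul0r //; lia.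
rewrite sum_supsets sum_subsets_card big_ord_recl /g /= mul0r mul0rn add0r.
by apply: eq_bigr => k _; rewrite /bump /= add1n mul1r -mulrA mulr_natl.
Qed.

Section ChainExpansions.
Variables (R : fieldType) (x : R) (E : finType).
Hypothesis x_neq1 : x != 1.

Lemma mul_eulerianA_chain_total n : (0 < n)%N ->
  x * eulerianA n x =
  \sum_(j < n.+1) x * (1 - x ^+ j) / (1 - x) * chain_total x (n - j) *+ 'C(n, j).
Proof.
move=> n_gt0; rewrite mul_eulerianA //; apply/eqP; rewrite -subr_eq0 -sumrB.
rewrite (eq_bigr (fun j : 'I_n.+1 =>
          'C(n, j)%:R * (x ^+ j - x) * chain_total x (n - j) / (1 - x))).
  by rewrite -mulr_suml chain_total_recurrence // mul0r.
move=> j _; rewrite derangementD_chain_total // -mulr_natl.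
by field; exact: one_subr_neq0.
Qed.

Lemma derangementD_chains : (0 < #|E|)%N ->
  derangementD #|E| x = \sum_(1 <= m < #|E|.+1) chain_sum x m (set0 : {set E}).
Proof.
move=> E_gt0; rewrite derangementD_chain_total // /chain_total.
rewrite -(big_mkord xpredT (corank_chain_sum x ^~ #|E|)) big_ltn //= gtn_eqF // add0r.
by apply: eq_bigr => m _; rewrite chain_sum_corank setC0 cardsT.
Qed.

Lemma mul_eulerianA_chains : (0 < #|E|)%N ->
  x * eulerianA #|E| x =
  \sum_(m < #|E|.+1) \sum_(A : {set E}) x * (1 - x ^+ #|A|) / (1 - x) * chain_sum x m A.
Proof.
move=> E_gt0; rewrite mul_eulerianA_chain_total // exchange_big /=.
have := sum_subsets_card [set: E] (fun k => x * (1 - x ^+ k) / (1 - x) * chain_total x (#|E| - k)).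
rewrite cardsT => <-; apply: eq_big => [A|A _]; first by rewrite subsetT.
rewrite -mulr_sumr; congr (_ * _); under eq_bigr do rewrite chain_sum_corank.
have card_A := cardsC A.
rewrite chain_totalE; first by rewrite -card_A addKn.
by rewrite -card_A ltnS leq_addl.
Qed.

Lemma sum_chains_by_bottom m (G : nat -> R) :
  \sum_(F : {ffun 'I_m.+1 -> {set E}} | strict_chain F && (F ord_max == setT))
    G #|F ord0| * chain_wt x F =
  \sum_(A : {set E}) G #|A| * chain_sum x m A.
Proof.
rewrite (partition_big (fun F : {ffun 'I_m.+1 -> {set E}} => F ord0) predT) //=.
apply: eq_bigr => A _; rewrite /chain_sum mulr_sumr.
apply: eq_big => [F|F /andP[_ /eqP ->]] //.
by case: (strict_chain F); case: (F ord0 == A); case: (F ord_max == setT).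
Qed.

End ChainExpansions.

Unset Implicit Arguments.
Set Strict Implicit.

Theorem lemma3p20 (R : fieldType) (E : finType) (x : R) (hx : x != 1)
    (hn : (0 < #|E|)%N) :
  derangementD #|E| x =
    \sum_(1 <= m < #|E|.+1)
      \sum_(F : {ffun 'I_m.+1 -> {set E}} |
              [&& strict_chain F, F ord0 == set0 & F ord_max == setT])
        chain_wt x F
  /\
  x * eulerianA #|E| x =
    \sum_(0 <= m < #|E|.+1)
      \sum_(F : {ffun 'I_m.+1 -> {set E}} |
              strict_chain F && (F ord_max == setT))
        (x * (1 - x ^+ #|F ord0|) / (1 - x)) * chain_wt x F.
Proof.
split; first exact: derangementD_chains.
rewrite mul_eulerianA_chains // big_mkord; apply: eq_bigr => m _.
by rewrite (@sum_chains_by_bottom R x E m (fun k => x * (1 - x ^+ k) / (1 - x))).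
Qed.
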